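(* Let $\mathbf{k}$ be any field, $p\ge 3$ an integer, and $S=\mathbf{k}[e_1,\ldots,e_{2p}]$. Let $f_0=t^2+e_pt+e_{2p}$ and $f_i=e_it+e_{p+i}$ for $1\le i\le p-1$, in $S[t]$. Then the elimination ideal $I=\langle f_0,\ldots,f_{p-1}\rangle\cap S$ equals the ideal $J$ of $S$ generated by the $3\times 3$ minors of the $3\times(2p-1)$ matrix $$\begin{pmatrix} 1 & e_1 & 0 & e_2 & 0 & \cdots & e_{p-1} & 0\\ e_p & e_{p+1} & e_1 & e_{p+2} & e_2 & \cdots & e_{2p-1} & e_{p-1}\\ e_{2p} & 0 & e_{p+1} & 0 & e_{p+2} & \cdots & 0 & e_{2p-1}\end{pmatrix}.$$
   Context: The ideal $\langle f_0,\dots,f_{p-1}\rangle$ is taken in $S[t]$ and intersected with $S\subset S[t]$. The matrix consists of the column $(1,e_p,e_{2p})^T$ followed, for each $i=1,\dots,p-1$, by the two columns $(e_i,e_{p+i},0)^T$ and $(0,e_i,e_{p+i})^T$. *)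

From HB Require Import structures.
From mathcomp Require Import all_boot all_order all_algebra.
From mathcomp Require Import mpoly.
Unset Printing Implicit Defensive.
Import GRing.Theory.
Local Open Scope ring_scope.

Definition in_ideal_gen (R : comPzRingType) (G : R -> Prop) (x : R) : Prop :=
  exists (n : nat) (g : 'I_n -> R) (c : 'I_n -> R),
    (forall i, G (g i)) /\ x = \sum_(i < n) c i * g i.

(* S = k[e_1, ..., e_{2p}] is {mpoly k[p.*2]}; e_j (1 <= j <= 2p) is 'X_(j-1). *)
Definition evar (k : fieldType) (p j : nat) : {mpoly k[p.*2]} :=
  match insub j.-1 with Some i => 'X_i | None => 0 end.

Definition f0 (k : fieldType) (p : nat) : {poly {mpoly k[p.*2]}} :=
  'X^2 + (evar k p p)%:P * 'X + (evar k p p.*2)%:P.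

Definition fi (k : fieldType) (p i : nat) : {poly {mpoly k[p.*2]}} :=
  (evar k p i)%:P * 'X + (evar k p (p + i))%:P.

Definition fgens (k : fieldType) (p : nat) (q : {poly {mpoly k[p.*2]}}) : Prop :=
  q = f0 k p \/ exists i, (1 <= i <= p.-1)%N /\ q = fi k p i.

Definition elim_ideal (k : fieldType) (p : nat) (x : {mpoly k[p.*2]}) : Prop :=
  @in_ideal_gen _ (fgens k p) x%:P.

(* The 3 x (2p-1) matrix: column 0 is (1, e_p, e_{2p}); for i = 1..p-1,
   column 2i-1 is (e_i, e_{p+i}, 0) and column 2i is (0, e_i, e_{p+i}). *)
Definition Mmat (k : fieldType) (p : nat) : 'M[{mpoly k[p.*2]}]_(3, p.*2.-1) :=
  \matrix_(r < 3, c < p.*2.-1)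
    let i := (c.+1 %/ 2)%N in
    if c == 0%N :> nat then
      match val r with 0%N => 1 | 1%N => evar k p p | _ => evar k p p.*2 end
    else if odd c then
      match val r with 0%N => evar k p i | 1%N => evar k p (p + i) | _ => 0 end
    else
      match val r with 0%N => 0 | 1%N => evar k p i | _ => evar k p (p + i) end.

Definition minor3 (k : fieldType) (p : nat) (x : {mpoly k[p.*2]}) : Prop :=
  exists f : 'I_3 -> 'I_(p.*2.-1),
    (f ord0 < f (inord 1) < f (inord 2))%N /\ x = \det (colsub f (Mmat k p)).

Definition minor_ideal (k : fieldType) (p : nat) (x : {mpoly k[p.*2]}) : Prop :=
  @in_ideal_gen _ (minor3 k p) x.

From HB Require Import structures.
From mathcomp Require Import all_boot all_order all_algebra.
From mathcomp Require Import mpoly.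
From mathcomp Require Import zify ring.
Set Implicit Arguments.
Unset Strict Implicit.
Unset Printing Implicit Defensive.
Local Open Scope ring_scope.
Import GRing.Theory.

(* Minors into the elimination ideal: (t^2, t, 1) times a column of the matrix
   is f_0, t f_i or f_i, so by Cramer's rule every 3 x 3 minor is an
   S[t]-combination of the f_i.
   Conversely, attach to each variable x_j other than e_p, e_2p the linear form
   h_j = x_j t + z_j, where f_i = h(e_i) and (t + e_p) f_i - e_i f_0 = h(e_(p+i)).
   Dividing by the monic f_0, every element of <f_0, ..., f_(p-1)> is
   q f_0 + sum_j u_j h_j with u_j in S; for an element x of S this forces q = 0,
   sum_j u_j x_j = 0 and x = sum_j u_j z_j.  As the x_j are distinct variables,
   this syzygy is a combination of Koszul syzygies, so x lies in the ideal of
   the x_l z_j - x_j z_l, each of which is, up to sign and a factor e_2p, the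
   minor on column 0 and two other columns. *)

Section IdealGen.
Variables (R : comPzRingType) (G : R -> Prop).

Lemma ideal_gen0 : in_ideal_gen _ G 0.
Proof. by exists 0%N, (fun _ => 0), (fun _ => 0); rewrite big_ord0; split=> [[]|]. Qed.

Lemma mem_ideal_gen g : G g -> in_ideal_gen _ G g.
Proof.
by move=> Gg; exists 1%N, (fun _ => g), (fun _ => 1); rewrite big_ord1 mul1r.
Qed.

Lemma ideal_genD x y :
  in_ideal_gen _ G x -> in_ideal_gen _ G y -> in_ideal_gen _ G (x + y).
Proof.
move=> [n1 [g1 [c1 [G1 ->]]]] [n2 [g2 [c2 [G2 ->]]]].
exists (n1 + n2)%N, (fun i => match split i with inl a => g1 a | inr b => g2 b end),
  (fun i => match split i with inl a => c1 a | inr b => c2 b end).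
split=> [i|]; first by case: split.
rewrite big_split_ord; congr (_ + _); apply: eq_bigr => i _.
  by rewrite (unsplitK (inl _)).
by rewrite (unsplitK (inr _)).
Qed.

Lemma ideal_genMl c x : in_ideal_gen _ G x -> in_ideal_gen _ G (c * x).
Proof.
move=> [n [g [c1 [G1 ->]]]]; exists n, g, (fun i => c * c1 i); split=> //.
by rewrite mulr_sumr; apply: eq_bigr => i _; rewrite mulrA.
Qed.

Lemma ideal_genN x : in_ideal_gen _ G x -> in_ideal_gen _ G (- x).
Proof. by rewrite -mulN1r; apply: ideal_genMl. Qed.

Lemma ideal_gen_sum (I : Type) (r : seq I) (P : pred I) (F : I -> R) :
  (forall i, P i -> in_ideal_gen _ G (F i)) ->
  in_ideal_gen _ G (\sum_(i <- r | P i) F i).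
Proof. by move=> GF; apply: big_ind => //; [exact: ideal_gen0 | exact: ideal_genD]. Qed.

Lemma ideal_gen_ind (Q : R -> Prop) :
  Q 0 -> (forall x y, Q x -> Q y -> Q (x + y)) -> (forall c g, G g -> Q (c * g)) ->
  forall x, in_ideal_gen _ G x -> Q x.
Proof.
move=> Q0 QD QM x [n [g [c [Gg ->]]]].
by apply: big_ind => // i _; apply: QM.
Qed.

Lemma det_mem_ideal_gen n (N : 'M[R]_n) (w : 'rV_n) (j0 : 'I_n) :
  w 0 j0 = 1 -> (forall j, in_ideal_gen _ G ((w *m N) 0 j)) ->
  in_ideal_gen _ G (\det N).
Proof.
move=> w1 GwN.
have <- : (w *m N *m \adj N) 0 j0 = \det N.
  by rewrite -mulmxA mul_mx_adj mul_mx_scalar mxE w1 mulr1.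
by rewrite mxE; apply: ideal_gen_sum => j _; rewrite mulrC; apply: ideal_genMl.
Qed.

End IdealGen.

Lemma ideal_gen_rmorph (R R' : comPzRingType) (G : R -> Prop) (H : R' -> Prop)
    (f : {rmorphism R -> R'}) :
  (forall g, G g -> in_ideal_gen _ H (f g)) ->
  forall x, in_ideal_gen _ G x -> in_ideal_gen _ H (f x).
Proof.
move=> GH; apply: (ideal_gen_ind (Q := fun x => in_ideal_gen _ H (f x))).
- by rewrite rmorph0; apply: ideal_gen0.
- by move=> x y; rewrite rmorphD; apply: ideal_genD.
- by move=> c g Gg; rewrite rmorphM; apply/ideal_genMl/GH.
Qed.

Lemma det_mx33 (R : comPzRingType) (A : 'M[R]_3) :
  \det A = A 0 0 * (A 1 1 * A 2%:R 2%:R - A 1 2%:R * A 2%:R 1)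
         - A 0 1 * (A 1 0 * A 2%:R 2%:R - A 1 2%:R * A 2%:R 0)
         + A 0 2%:R * (A 1 0 * A 2%:R 1 - A 1 1 * A 2%:R 0).
Proof.
pose B (i j : nat) := A (inord i) (inord j).
have AB (i j : 'I_3) : A i j = B i j by rewrite /B !inord_val.
rewrite (expand_det_row _ 0) !big_ord_recr big_ord0 /= /cofactor.
rewrite !(expand_det_row _ 0) !big_ord_recr !big_ord0 /= /cofactor.
rewrite !det_mx11 !mxE !AB /= !expr0 !expr1 ?exprS ?expr0.
ring.
Qed.

Section LinearPoly.
Variable R : comNzRingType.

Lemma size_linear (a b : R) : (size (a%:P * 'X + b%:P)%R <= 2)%N.
Proof. by rewrite size_MXaddC; case: ifP => // _; rewrite ltnS size_polyC_leq1. Qed.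

Lemma size_le2_linear (r : {poly R}) : (size r <= 2)%N -> r = (r`_1)%:P * 'X + (r`_0)%:P.
Proof.
move=> r2; apply/polyP => -[|[|j]]; rewrite coefD coefMX !coefC /= ?addr0 ?add0r //.
by rewrite nth_default // (leq_trans r2).
Qed.

Lemma monic_quadratic (a b : R) : 'X^2 + a%:P * 'X + b%:P \is monic.
Proof.
by rewrite -addrA monicE lead_coefDl ?lead_coefXn // size_polyXn ltnS size_linear.
Qed.

Lemma size_quadratic (a b : R) : size ('X^2 + a%:P * 'X + b%:P)%R = 3%N.
Proof. by rewrite -addrA size_polyDl size_polyXn // ltnS size_linear. Qed.

Lemma monic_mul_small (q f : {poly R}) :
  f \is monic -> (size (q * f)%R < size f)%N -> q = 0.
Proof.
move=> mon_f; have [-> // | q_neq0] := eqVneq q 0.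
have := size_poly_gt0 q; rewrite q_neq0 size_Mmonic //; lia.
Qed.

Lemma polyC_eq_linear_mod (f q : {poly R}) (a b c : R) :
  f \is monic -> size f = 3%N -> c%:P = q * f + (a%:P * 'X + b%:P) ->
  [/\ q = 0, a = 0 & c = b].
Proof.
move=> mon_f size_f def_c.
have q0 : q = 0.
  apply: (monic_mul_small mon_f); rewrite size_f.
  rewrite (_ : q * f = (- a)%:P * 'X + (c - b)%:P) ?ltnS ?size_linear //.
  by apply: (addIr (a%:P * 'X + b%:P)); rewrite -def_c polyCN polyCB; ring.
move: def_c; rewrite q0 mul0r add0r => /polyP coefs.
move: (coefs 0%N) (coefs 1%N); rewrite !coefD !coefMX !coefC /= add0r addr0.
by move=> -> <-.
Qed.

End LinearPoly.

Section KoszulSyzygy.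
Variables (R : idomainType) (m : nat).
Local Notation P := {mpoly R[m]}.

Definition substX0 (j0 : 'I_m) : {rmorphism P -> P} :=
  mmap (@mpolyC m R) (fun j => if j == j0 then 0 else 'X_j).

Lemma substX0X j0 j : substX0 j0 'X_j = if j == j0 then 0 else 'X_j.
Proof. by rewrite /substX0 /= mmapX mmap1U. Qed.

Lemma mpolyX_neq0 (j : 'I_m) : 'X_j != 0 :> P.
Proof.
apply/eqP => X0; have := @mcoeffXU m R j j.
by rewrite X0 mcoeff0 eqxx => /eqP; rewrite eq_sym oner_eq0.
Qed.

Lemma mpoly_splitX0 j0 (x : P) : exists q, x = 'X_j0 * q + substX0 j0 x.
Proof.
pose splits y := exists q, y = 'X_j0 * q + substX0 j0 y.
have splitD y z : splits y -> splits z -> splits (y + z).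
  move=> [q1 def_y] [q2 def_z]; exists (q1 + q2).
  by rewrite rmorphD {1}def_y {1}def_z; ring.
have splitM y z : splits y -> splits z -> splits (y * z).
  move=> [q1 def_y] [q2 def_z]; exists (q1 * z + substX0 j0 y * q2).
  set sy := substX0 j0 y; set sz := substX0 j0 z.
  by rewrite rmorphM -/sy -/sz def_y def_z; ring.
have splitC c : splits c%:MP by exists 0; rewrite /substX0 /= mmapC mulr0 add0r.
have splitX j : splits 'X_j.
  rewrite /splits substX0X; case: eqP => [->|_]; first by exists 1; rewrite mulr1 addr0.
  by exists 0; rewrite mulr0 add0r.
elim/mpolyind: x => [|c mm x _ _ split_x]; first by rewrite -mpolyC0; apply: splitC.
apply: (splitD _ _ _ split_x); rewrite -mul_mpolyC; apply: (splitM _ _ (splitC c)).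
rewrite mpolyXE_id; apply: (big_ind splits) => [|y z|i _].
- by rewrite -mpolyC1; apply: (splitC 1).
- exact: splitM.
- elim: (mm i) => [|n IHn]; first by rewrite expr0 -mpolyC1; apply: (splitC 1).
  by rewrite exprS; apply: (splitM _ _ (splitX i)).
Qed.

(* Write u_j = X_j0 q_j + v_j with v_j free of X_j0: then v is a syzygy on the
   remaining variables and u_j0 = - sum_j q_j X_j. *)
Lemma koszul_syzygy (G : P -> Prop) (Z : 'I_m -> P) (s : seq 'I_m) (u : 'I_m -> P) :
  uniq s -> {in s &, forall j l, in_ideal_gen _ G ('X_j * Z l - 'X_l * Z j)} ->
  \sum_(j <- s) u j * 'X_j = 0 -> in_ideal_gen _ G (\sum_(j <- s) u j * Z j).
Proof.
elim: s u => [|j0 s IHs] u; first by rewrite !big_nil => *; apply: ideal_gen0.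
rewrite cons_uniq => /andP [j0_notin_s uniq_s] koszul_rel; rewrite !big_cons => syz.
have [q def_u] := fin_all_exists (fun j => mpoly_splitX0 j0 (u j)).
pose v j := substX0 j0 (u j).
have syz_v : \sum_(j <- s) v j * 'X_j = 0.
  transitivity (substX0 j0 (u j0 * 'X_j0 + \sum_(j <- s) u j * 'X_j)); last first.
    by rewrite syz rmorph0.
  rewrite rmorphD rmorphM substX0X eqxx mulr0 add0r rmorph_sum.
  apply: eq_big_seq => j js; rewrite /v rmorphM substX0X.
  by case: eqP js => [->|//]; rewrite (negbTE j0_notin_s).
have def_u0 : u j0 = - \sum_(j <- s) q j * 'X_j.
  have : 'X_j0 * (u j0 + \sum_(j <- s) q j * 'X_j) =
      u j0 * 'X_j0 + \sum_(j <- s) u j * 'X_j - \sum_(j <- s) v j * 'X_j.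
    rewrite mulrDr mulr_sumr -addrA -sumrB [u j0 * _]mulrC; congr (_ + _).
    by apply: eq_bigr => j _; rewrite /v {1}def_u; ring.
  rewrite syz syz_v subr0 => /eqP.
  by rewrite mulf_eq0 (negbTE (mpolyX_neq0 _)) addr_eq0 => /eqP.
have -> : u j0 * Z j0 + \sum_(j <- s) u j * Z j =
    \sum_(j <- s) v j * Z j + \sum_(j <- s) q j * ('X_j0 * Z j - 'X_j * Z j0).
  rewrite def_u0 mulNr mulr_suml -sumrN -!big_split; apply: eq_bigr => j _ /=.
  by rewrite /v {1}def_u; ring.
apply: ideal_genD.
  by apply: IHs => // j l js ls; apply: koszul_rel; rewrite inE ?js ?ls orbT.
rewrite big_seq; apply: ideal_gen_sum => j js; apply/ideal_genMl/koszul_rel.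
  exact: mem_head.
by rewrite inE js orbT.
Qed.

End KoszulSyzygy.

Section EliminationIdeal.
Variables (k : fieldType) (p : nat).
Local Notation S := {mpoly k[p.*2]}.
Local Notation e := (evar k p).

Lemma evarE (j : 'I_p.*2) : e j.+1 = 'X_j.
Proof. by rewrite /evar /= valK. Qed.

Lemma f0_monic : f0 k p \is monic.
Proof. exact: monic_quadratic. Qed.

Lemma size_f0 : size (f0 k p) = 3%N.
Proof. exact: size_quadratic. Qed.

Lemma fgens_fi i : (0 < i < p)%N -> fgens k p (fi k p i).
Proof. by move=> i_bd; right; exists i; split=> //; lia. Qed.

Lemma Mmat_col_mem (c : 'I_p.*2.-1) :
  in_ideal_gen _ (fgens k p) (\sum_(r < 3) 'X^(2 - r) * (Mmat k p r c)%:P).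
Proof.
have c_lt := ltn_ord c; rewrite !big_ord_recr big_ord0 /= !mxE /=.
rewrite add0r subn0 subn1 subnn /= expr0 mul1r expr1.
case: eqP => [_ | /eqP c_neq0] /=.
  by apply: mem_ideal_gen; left; rewrite /f0 polyC1; ring.
have fi_mem : fgens k p (fi k p (c.+1 %/ 2)) by apply: fgens_fi; lia.
case: ifP => _; rewrite polyC0 ?mulr0 ?addr0 ?add0r.
- rewrite (_ : _ + _ = 'X * fi k p (c.+1 %/ 2)) /fi; last by ring.
  exact/ideal_genMl/mem_ideal_gen.
- by rewrite (_ : _ + _ = fi k p (c.+1 %/ 2)) /fi; [apply: mem_ideal_gen | ring].
Qed.

Lemma minor_sub_elim x : minor_ideal k p x -> elim_ideal k p x.
Proof.
apply: (ideal_gen_rmorph (f := polyC)) => _ [f [_ ->]].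
rewrite -det_map_mx.
apply: (det_mem_ideal_gen (w := \row_(r < 3) 'X^(2 - r)) (j0 := ord_max)).
  by rewrite mxE subnn expr0.
move=> j; rewrite mxE (eq_bigr (fun r : 'I_3 => 'X^(2 - r) * (Mmat k p r (f j))%:P)).
  exact: Mmat_col_mem.
by move=> r _; rewrite [in LHS]mxE [map_mx _ _ _ _]mxE [colsub _ _ _ _]mxE.
Qed.

(* Mmat k p r c unfolds to Mcol c r; indexing columns by naturals lets us
   evaluate them without carrying ordinal bounds. *)
Definition Mcol (c r : nat) : S :=
  let i := (c.+1 %/ 2)%N in
  if c == 0%N then match r with 0%N => 1 | 1%N => e p | _ => e p.*2 end
  else if odd c then match r with 0%N => e i | 1%N => e (p + i) | _ => 0 end
  else match r with 0%N => 0 | 1%N => e i | _ => e (p + i) end.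

Lemma Mcol0 : Mcol 0 = fun r => match r with 0%N => 1 | 1%N => e p | _ => e p.*2 end.
Proof. by []. Qed.

Lemma Mcol_odd i : (0 < i)%N ->
  Mcol i.*2.-1 = fun r => match r with 0%N => e i | 1%N => e (p + i) | _ => 0 end.
Proof.
move=> i_gt0; rewrite /Mcol (_ : (i.*2.-1 == 0) = false); last by lia.
rewrite (_ : (i.*2.-1.+1 %/ 2 = i)%N); last by lia.
by case: i i_gt0 => // i _; rewrite doubleS /= odd_double.
Qed.

Lemma Mcol_even i : (0 < i)%N ->
  Mcol i.*2 = fun r => match r with 0%N => 0 | 1%N => e i | _ => e (p + i) end.
Proof.
move=> i_gt0; rewrite /Mcol odd_double (_ : (i.*2 == 0) = false); last by lia.
by rewrite (_ : (i.*2.+1 %/ 2 = i)%N); last by lia.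
Qed.

Definition minor0 (c1 c2 : nat) : S :=
  \det (\matrix_(r < 3, j < 3) Mcol (nth 0 [:: 0; c1; c2] j) r).

Lemma minor0E c1 c2 : minor0 c1 c2 =
  Mcol c1 1 * Mcol c2 2 - Mcol c2 1 * Mcol c1 2
  - e p * (Mcol c1 0 * Mcol c2 2 - Mcol c2 0 * Mcol c1 2)
  + e p.*2 * (Mcol c1 0 * Mcol c2 1 - Mcol c2 0 * Mcol c1 1).
Proof. by rewrite /minor0 det_mx33 !mxE /= !modn_small // addn1 Mcol0 /=; ring. Qed.

Lemma minor0_sorted c1 c2 : (0 < c1 < c2)%N -> (c2 < p.*2.-1)%N ->
  minor_ideal k p (minor0 c1 c2).
Proof.
move=> c12 c2_lt; pose cs := [:: 0; c1; c2]%N.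
pose f (j : 'I_3) : 'I_p.*2.-1 := insubd (Ordinal c2_lt) (nth 0%N cs j).
have fE j : val (f j) = nth 0%N cs j.
  by rewrite val_insubd; case: ifP => // /negP; case: j => -[|[|[|]]] //= _; lia.
apply: mem_ideal_gen; exists f; split; first by rewrite !fE /= !inordK.
by congr (\det _); apply/matrixP => r j; rewrite !mxE -fE.
Qed.

Lemma minor0_mem c1 c2 : (0 < c1 < p.*2.-1)%N -> (0 < c2 < p.*2.-1)%N ->
  minor_ideal k p (minor0 c1 c2).
Proof.
move=> c1_bd c2_bd; case: (ltngtP c1 c2) => [lt12 | lt21 | <-].
- by apply: minor0_sorted; lia.
- rewrite (_ : minor0 c1 c2 = - minor0 c2 c1); last by rewrite !minor0E; ring.
  by apply/ideal_genN/minor0_sorted; lia.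
- by rewrite (_ : minor0 c1 c1 = 0); [apply: ideal_gen0 | rewrite minor0E; ring].
Qed.

(* The index j : 'I_p.*2 stands for the variable e_(j+1) = 'X_j. *)
Definition fi_var (j : 'I_p.*2) : bool := (j.+1 != p) && (j.+1 != p.*2).

Definition lconst (j : 'I_p.*2) : S :=
  if (j < p)%N then e (p + j.+1) else e p * e j.+1 - e (j.+1 - p) * e p.*2.

Lemma fi_var_cases j : fi_var j -> exists2 i, (0 < i < p)%N &
  (j.+1 = i /\ lconst j = e (p + i)) \/
  ((j.+1 = p + i)%N /\ lconst j = e p * e (p + i) - e i * e p.*2).
Proof.
rewrite /fi_var /lconst => /andP [/eqP j_neq_p /eqP j_neq_2p]; have := ltn_ord j.
case: (ltnP j p) => [j_lt_p | j_ge_p] j_lt.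
  by exists j.+1; [lia | left].
exists (j.+1 - p)%N; first lia.
by right; rewrite subnKC ?leqW.
Qed.

Lemma koszul_pair_minor j l : fi_var j -> fi_var l ->
  minor_ideal k p (e j.+1 * lconst l - e l.+1 * lconst j).
Proof.
move=> /fi_var_cases [i i_bd [[-> ->] | [-> ->]]] /fi_var_cases [i' i'_bd [[-> ->] | [-> ->]]].
- rewrite (_ : _ - _ = minor0 i.*2 i'.*2); first by apply: minor0_mem; lia.
  by rewrite minor0E !Mcol_even //=; [ring | lia | lia].
- rewrite (_ : _ - _ = minor0 i'.*2 i.*2.-1); first by apply: minor0_mem; lia.
  by rewrite minor0E Mcol_even ?Mcol_odd //=; [ring | lia | lia].
- rewrite (_ : _ - _ = minor0 i'.*2.-1 i.*2); first by apply: minor0_mem; lia.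
  by rewrite minor0E Mcol_even ?Mcol_odd //=; [ring | lia | lia].
- rewrite (_ : _ - _ = e p.*2 * minor0 i.*2 i'.*2).
    by apply/ideal_genMl/minor0_mem; lia.
  by rewrite minor0E !Mcol_even //=; [ring | lia | lia].
Qed.

Definition lform (j : 'I_p.*2) : {poly S} := (e j.+1)%:P * 'X + (lconst j)%:P.

Lemma lform_fi i : (0 < i < p)%N -> exists jl jh : 'I_p.*2,
  [/\ fi_var jl, fi_var jh, lform jl = fi k p i &
       lform jh = ('X + (e p)%:P) * fi k p i - (e i)%:P * f0 k p].
Proof.
move=> i_bd; have jl_lt : (i.-1 < p.*2)%N by lia.
have jh_lt : ((p + i).-1 < p.*2)%N by lia.
exists (Ordinal jl_lt), (Ordinal jh_lt); rewrite /fi_var /lform /lconst /=.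
have -> : (i.-1 < p)%N = true by lia.
have -> : ((p + i).-1 < p)%N = false by lia.
have -> : (i.-1.+1 = i)%N by lia.
have -> : ((p + i).-1.+1 = p + i)%N by lia.
rewrite addKn; split=> //; try lia.
by rewrite /fi /f0 !(polyCB, polyCM); ring.
Qed.

Definition linear_mod_f0 (y : {poly S}) : Prop :=
  exists (q : {poly S}) (u : 'I_p.*2 -> S),
    y = q * f0 k p + \sum_(j | fi_var j) (u j)%:P * lform j.

Lemma linear_mod_f0D y z :
  linear_mod_f0 y -> linear_mod_f0 z -> linear_mod_f0 (y + z).
Proof.
move=> [q1 [u1 ->]] [q2 [u2 ->]]; exists (q1 + q2), (fun j => u1 j + u2 j).
under [in RHS]eq_bigr do rewrite rmorphD mulrDl.
by rewrite big_split mulrDl addrACA.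
Qed.

Lemma linear_mod_f0_mulf0 q : linear_mod_f0 (q * f0 k p).
Proof.
by exists q, (fun=> 0); rewrite big1 ?addr0 // => j _; rewrite rmorph0 mul0r.
Qed.

Lemma linear_mod_f0_lform v j : fi_var j -> linear_mod_f0 (v%:P * lform j).
Proof.
move=> fj; exists 0, (fun j' => if j' == j then v else 0).
rewrite mul0r add0r (bigD1 j) //= eqxx big1 ?addr0 // => j' /andP [_ /negbTE ->].
by rewrite rmorph0 mul0r.
Qed.

Lemma linear_mod_f0_fgens c g : fgens k p g -> linear_mod_f0 (c * g).
Proof.
case=> [-> | [i [i_bd ->]]]; first exact: linear_mod_f0_mulf0.
have [|jl [jh [fjl fjh lform_jl lform_jh]]] := @lform_fi i; first lia.
set r := Pdiv.Ring.rmodp c (f0 k p); set d := Pdiv.Ring.rdivp c (f0 k p).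
have r_le2 : (size r <= 2)%N.
  by have := Pdiv.Ring.ltn_rmodpN0 c (monic_neq0 f0_monic); rewrite size_f0.
rewrite (Pdiv.RingMonic.rdivp_eq f0_monic c) -/r -/d (size_le2_linear r_le2).
rewrite (_ : _ * fi k p i = (d * fi k p i + (r`_1 * e i)%:P) * f0 k p
   + (r`_0 - r`_1 * e p)%:P * lform jl + (r`_1)%:P * lform jh).
  apply: linear_mod_f0D; last exact: linear_mod_f0_lform.
  by apply: linear_mod_f0D; [apply: linear_mod_f0_mulf0 | apply: linear_mod_f0_lform].
by rewrite lform_jl lform_jh !(polyCB, polyCM); ring.
Qed.

Lemma linear_mod_f0_elim x : elim_ideal k p x -> linear_mod_f0 x%:P.
Proof.
apply: (ideal_gen_ind (Q := linear_mod_f0)).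
- by rewrite -(mul0r (f0 k p)); apply: linear_mod_f0_mulf0.
- exact: linear_mod_f0D.
- exact: linear_mod_f0_fgens.
Qed.

Lemma linear_mod_f0_polyC x : linear_mod_f0 x%:P -> exists u : 'I_p.*2 -> S,
  \sum_(j | fi_var j) u j * e j.+1 = 0 /\ x = \sum_(j | fi_var j) u j * lconst j.
Proof.
move=> [q [u def_x]]; exists u.
set B := \sum_(j | fi_var j) u j * e j.+1; set A := \sum_(j | fi_var j) u j * lconst j.
have lin_sum : \sum_(j | fi_var j) (u j)%:P * lform j = B%:P * 'X + A%:P.
  rewrite !rmorph_sum mulr_suml -big_split; apply: eq_bigr => j _ /=.
  by rewrite /lform !rmorphM mulrDr mulrA.
rewrite {}lin_sum in def_x.
by have [] := polyC_eq_linear_mod f0_monic size_f0 def_x.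
Qed.

Lemma elim_sub_minor x : elim_ideal k p x -> minor_ideal k p x.
Proof.
move=> /linear_mod_f0_elim /linear_mod_f0_polyC [u [syz ->]].
rewrite -big_filter; apply: koszul_syzygy.
- exact/filter_uniq/index_enum_uniq.
- move=> j l; rewrite !mem_filter => /andP [fj _] /andP [fl _].
  by rewrite -!evarE; apply: koszul_pair_minor.
- by rewrite big_filter -{}[RHS]syz; apply: eq_bigr => j _; rewrite evarE.
Qed.

End EliminationIdeal.

Theorem corollary6p9 (k : fieldType) (p : nat) (hp : (3 <= p)%N) :
  forall x : {mpoly k[p.*2]}, elim_ideal k p x <-> minor_ideal k p x.
Proof.
(* The argument works for every p. *)
by move=> x; split; [apply: elim_sub_minor | apply: minor_sub_elim].
Qed.
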